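(* Let $\mathbb{F}$ be a finite field and $n\ge1$. The completely isolated subsemigroups of $M(n,\mathbb{F})$ are exactly $M(n,\mathbb{F})$, $\mathrm{GL}(n,\mathbb{F})$ and $I_{n-1}=M(n,\mathbb{F})\setminus\mathrm{GL}(n,\mathbb{F})$.
   Context: $M(n,\mathbb{F})$ is the semigroup of $n\times n$ matrices over $\mathbb{F}$ under multiplication; $\mathrm{GL}(n,\mathbb{F})$ is its group of units; $I_{n-1}$ is the set of all matrices of rank at most $n-1$. A (nonempty) subsemigroup $T$ of a semigroup $S$ is completely isolated if for all $x,y\in S$, $xy\in T$ implies $x\in T$ or $y\in T$. *)

From HB Require Import structures.
From mathcomp Require Import all_boot all_order all_algebra all_fingroup all_field.
Set Implicit Arguments. Unset Strict Implicit. Unset Printing Implicit Defensive.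
Import GRing.Theory.
Local Open Scope ring_scope.

Definition subsemigroup (F : finFieldType) (n : nat) (T : {set 'M[F]_n}) : Prop :=
  T != set0 /\ (forall x y, x \in T -> y \in T -> x *m y \in T).

Definition completely_isolated (F : finFieldType) (n : nat) (T : {set 'M[F]_n}) : Prop :=
  subsemigroup T /\ (forall x y : 'M[F]_n, x *m y \in T -> (x \in T) || (y \in T)).

Definition GLset (F : finFieldType) (n : nat) : {set 'M[F]_n} := [set A | A \in unitmx].

Definition Iset (F : finFieldType) (n : nat) : {set 'M[F]_n} := [set A | \rank A <= n.-1]%N.

From HB Require Import structures.
From mathcomp Require Import all_boot all_order all_algebra all_fingroup all_field.
Set Implicit Arguments. Unset Strict Implicit. Unset Printing Implicit Defensive.
Import GRing.Theory FinRing.Theory.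
Local Open Scope ring_scope.

(* Both a completely isolated subsemigroup [T] and its complement are closed
   under multiplication.  Every unit of the finite monoid has a power equal to
   [1], so all units lie on the same side as [1]; every singular matrix [A] is
   [g^-1 * N] with [g] invertible and [N] nilpotent, hence lies on the same
   side as [N] and [0].  So [T] is determined by whether it contains [1] and
   [0], and the three nonempty possibilities give the three sets. *)

Lemma unit_expr_order (R : finUnitRingType) (g : R) :
  g \is a GRing.unit -> exists2 k, (0 < k)%N & g ^+ k = 1.
Proof.
move=> gU; exists #[FinRing.unit R gU]%g; first exact: order_gt0.
by rewrite -[g]/(val (FinRing.unit R gU)) -val_unitX expg_order val_unit1.
Qed.

Section IsolatedSets.
Variable R : finUnitRingType.

Definition mul_isolated (T : {set R}) : Prop :=
  (forall x y, x \in T -> y \in T -> x * y \in T) /\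
  (forall x y, x * y \in T -> (x \in T) || (y \in T)).

Lemma mul_isolatedC (T : {set R}) : mul_isolated T -> mul_isolated (~: T).
Proof.
case=> mulT primeT; split=> x y.
  rewrite !inE => xT yT; apply: contra (primeT x y) _; exact/norP.
by rewrite !inE -negb_and; apply: contra => /andP[]; apply: mulT.
Qed.

Section MemIsolated.
Variables (T : {set R}) (isoT : mul_isolated T).

Lemma mem_exprS x k : x \in T -> x ^+ k.+1 \in T.
Proof.
move=> xT; elim: k => [|k IHk]; first by rewrite expr1.
by rewrite exprSr isoT.1.
Qed.

Lemma mem_of_exprS x k : x ^+ k.+1 \in T -> x \in T.
Proof.
elim: k => [|k IHk]; first by rewrite expr1.
by rewrite exprSr => /isoT.2 /orP[/IHk|].
Qed.

Lemma mem_unit g : 1 \in T -> g \is a GRing.unit -> g \in T.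
Proof.
move=> T1 /unit_expr_order[[|k] // _ gk1].
by apply: (@mem_of_exprS g k); rewrite gk1.
Qed.

Lemma mem1_of_unit g : g \is a GRing.unit -> g \in T -> 1 \in T.
Proof. by move=> /unit_expr_order[[|k] // _ <-]; apply: mem_exprS. Qed.

Lemma mem_nilpotent x k : 0 \in T -> x ^+ k.+1 = 0 -> x \in T.
Proof. by move=> T0 xk0; apply: (@mem_of_exprS x k); rewrite xk0. Qed.

(* If [g \in T] rather than [a], then [1], [g^-1] and [a = g^-1 * (g * a)]
   lie in [T] as well. *)
Lemma mem_unit_mul_nilpotent g a k : 0 \in T -> g \is a GRing.unit ->
  (g * a) ^+ k.+1 = 0 -> a \in T.
Proof.
move=> T0 gU gak0; have /isoT.2/orP[gT|//] := mem_nilpotent T0 gak0.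
have giT : g^-1 \in T by rewrite mem_unit ?unitrV // (mem1_of_unit gU).
by rewrite -(mulKr gU a) isoT.1 // (mem_nilpotent T0 gak0).
Qed.

End MemIsolated.

Hypothesis nonunit_nilpotent : forall a : R, a \isn't a GRing.unit ->
  exists g, exists k, g \is a GRing.unit /\ (g * a) ^+ k.+1 = 0.

(* The complement of [T] is isolated too, so the lemmas above also show
   that [1 \notin T] excludes all units and [0 \notin T] all non-units. *)
Lemma mem_isolated (T : {set R}) a : mul_isolated T ->
  (a \in T) = if a \is a GRing.unit then 1 \in T else 0 \in T.
Proof.
move=> isoT; have isoCT := mul_isolatedC isoT.
case: ifPn => [aU|/nonunit_nilpotent[g [k [gU gak0]]]].
  case: (boolP (1 \in T)) => T1; first exact: mem_unit.
  by apply/negbTE; rewrite -in_setC mem_unit ?inE.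
case: (boolP (0 \in T)) => T0; first exact: mem_unit_mul_nilpotent gU gak0.
by apply/negbTE; rewrite -in_setC (mem_unit_mul_nilpotent isoCT _ gU gak0) ?inE.
Qed.

End IsolatedSets.

Lemma subdiagonal_mx_expr (R : nzRingType) n (X : 'M[R]_n.+1) :
  (forall i j : 'I_n.+1, i != j.+1 :> nat -> X i j = 0) ->
  forall k (i j : 'I_n.+1), i != (j + k)%N :> nat -> (X ^+ k) i j = 0.
Proof.
move=> X0; elim=> [|k IHk] i j ijk.
  by rewrite expr0 mxE; case: eqP => // ij; rewrite ij addn0 eqxx in ijk.
rewrite exprSr -mulmxE mxE; apply: big1 => l _.
have [lj|lj] := eqVneq (l : nat) j.+1; last by rewrite X0 ?mulr0.
by rewrite IHk ?mul0r // lj addSnnS.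
Qed.

Lemma subdiagonal_mx_nilpotent (R : nzRingType) n (X : 'M[R]_n.+1) :
  (forall i j : 'I_n.+1, i != j.+1 :> nat -> X i j = 0) -> X ^+ n.+1 = 0.
Proof.
move=> X0; apply/matrixP => i j; rewrite mxE subdiagonal_mx_expr //.
by apply: contraTneq (ltn_ord i) => ->; rewrite -leqNgt leq_addl.
Qed.

Lemma perm_mx_unit (R : comUnitRingType) n (s : 'S_n.+1) :
  (perm_mx s : 'M[R]_n.+1) \is a GRing.unit.
Proof. by rewrite unitmxE det_perm unitrX ?unitrN1. Qed.

Lemma conj_mx_expr (R : comUnitRingType) n (U X : 'M[R]_n.+1) k :
  U \is a GRing.unit -> (U^-1 * X * U) ^+ k = U^-1 * X ^+ k * U.
Proof.
move=> UU; elim: k => [|k IHk]; first by rewrite !expr0 mulr1 mulVr.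
by rewrite exprSr IHk exprSr !mulrA mulrK.
Qed.

(* With [A = L *m pid_mx r *m U], take [g = U^-1 P L^-1] for the cyclic shift
   [P]: then [g * A] is conjugate to [P *m pid_mx r], which is subdiagonal
   because [r <= n]. *)
Lemma singular_unit_mul_nilpotent (F : fieldType) n (A : 'M[F]_n.+1) :
  A \isn't a GRing.unit ->
  exists g, exists k, g \is a GRing.unit /\ (g * A) ^+ k.+1 = 0.
Proof.
rewrite -[_ \is a _]row_free_unit /row_free => rA.
have {}rA : (\rank A < n.+1)%N by rewrite ltn_neqAle rA rank_leq_row.
pose s : 'S_n.+1 := perm (@ord_pred_inj n.+1).
pose L := col_ebase A; pose U := row_ebase A.
have LU : L \is a GRing.unit by apply: col_ebase_unit.
have UU : U \is a GRing.unit by apply: row_ebase_unit.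
pose X : 'M[F]_n.+1 := perm_mx s * pid_mx (\rank A).
exists (U^-1 * perm_mx s * L^-1), n; split.
  by rewrite unitrMr ?unitrV // unitrMl ?perm_mx_unit ?unitrV.
have -> : U^-1 * perm_mx s * L^-1 * A = U^-1 * X * U.
  by rewrite -{1}(mulmx_ebase A) !mulmxE -/L -/U !mulrA mulrVK.
rewrite conj_mx_expr // subdiagonal_mx_nilpotent ?mulr0 ?mul0r // => i j.
apply: contraNeq; rewrite /X -mulmxE -row_permE !mxE permE.
case: (boolP (_ && _)) => [/andP[/eqP ij jr] _|]; last by rewrite eqxx.
rewrite -ij -{1}(ord_predK i) [ordS _ : nat]/= modn_small //.
exact: leq_ltn_trans jr rA.
Qed.

Section MatrixIsolated.
Variables (F : finFieldType) (m : nat).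
Local Notation M := 'M[F]_m.+1.

Lemma completely_isolatedE (T : {set M}) :
  completely_isolated T <-> T != set0 /\ mul_isolated T.
Proof.
rewrite /completely_isolated /subsemigroup /mul_isolated mulmxE.
by split=> [[[? ?] ?]|[? [? ?]]].
Qed.

Lemma in_GLset (A : M) : (A \in GLset F m.+1) = (A \is a GRing.unit).
Proof. by rewrite inE. Qed.

Lemma in_Iset (A : M) : (A \in Iset F m.+1) = (A \isn't a GRing.unit).
Proof. by rewrite inE -row_free_unit -row_leq_rank -ltnNge ltnS. Qed.

Lemma mul_isolated_setT : mul_isolated [set: M].
Proof. by split=> x y; rewrite !inE. Qed.

Lemma unitr_mulmx (A B : M) :
  (A * B \is a GRing.unit) = (A \is a GRing.unit) && (B \is a GRing.unit).
Proof. exact: unitmx_mul. Qed.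

Lemma mul_isolated_GLset : mul_isolated (GLset F m.+1).
Proof.
split=> x y; rewrite !in_GLset unitr_mulmx; first by move=> -> ->.
by case/andP=> ->.
Qed.

Lemma mul_isolated_Iset : mul_isolated (Iset F m.+1).
Proof. by split=> x y; rewrite !in_Iset unitr_mulmx negb_and => // ->. Qed.

End MatrixIsolated.

Theorem proposition25 (F : finFieldType) (n : nat) (hn : (1 <= n)%N)
  (T : {set 'M[F]_n}) :
  completely_isolated T <->
  (T = [set: 'M[F]_n] \/ T = GLset F n \/ T = Iset F n).
Proof.
case: n hn T => [//|m] _ T; apply: iff_trans (completely_isolatedE T) _; split.
  case=> /set0Pn[A0 A0T] isoT.
  have memT B := mem_isolated (@singular_unit_mul_nilpotent F m) B isoT.
  have [T1|T1] := boolP (1 \in T); have [T0|T0] := boolP (0 \in T).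
  - by left; apply/setP=> A; rewrite memT inE T1 T0; case: ifP.
  - by right; left; apply/setP=> A; rewrite memT in_GLset (negbTE T0); case: ifP.
  - by right; right; apply/setP=> A; rewrite memT in_Iset (negbTE T1); case: ifP.
  - by move: A0T; rewrite memT (negbTE T0) (negbTE T1); case: ifP.
case=> [->|[->|->]]; split.
- by apply/set0Pn; exists 0; rewrite inE.
- exact: mul_isolated_setT.
- by apply/set0Pn; exists 1; rewrite in_GLset unitr1.
- exact: mul_isolated_GLset.
- by apply/set0Pn; exists 0; rewrite in_Iset unitr0.
- exact: mul_isolated_Iset.
Qed.
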